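(* For every observed law $\mathcal{P}$ of $(Y,D,Z)$ we have $U(\mathcal{P})=-L(\bar{\mathcal{P}})$, where $\bar{\mathcal{P}}$ is the law defined by $\bar{\mathcal{P}}(Y=y,D=d,Z=z)=\mathcal{P}(Y=y,D=1-d,Z=z)$ for all $y,d,z$.
   Context: Instrumental variable (IV) setting: $D\in\{0,1\}$ is a treatment, $Y$ an outcome taking values in a finite set $\{\gamma_0<\gamma_1<\dots<\gamma_{n-1}\}\subset\mathbb{R}$, and $Z$ an instrument taking values in $[\ell]:=\{0,\dots,\ell-1\}$. For $d\in\{0,1\}$, $z\in[\ell]$, $Y^{(d,z)}$ denotes the potential outcome of $Y$ under $D=d,Z=z$, and $D^{(z)}$ the potential treatment under $Z=z$. The IV model consists of: (Exclusion) $Y^{(d,z)}=Y^{(d,z')}$ a.s. for all $z,z'\in[\ell]$, $d\in\{0,1\}$, so one writes $Y^{(d)}$; (Random assignment) $Z$ is independent of $(Y^{(0)},Y^{(1)},D^{(0)},\dots,D^{(\ell-1)})$; (Consistency) $Y=(1-D)Y^{(0)}+DY^{(1)}$ and $D=\sum_{z\in[\ell]}\mathbb{1}(Z=z)D^{(z)}$. A full data law is a joint law of $(Y^{(0)},Y^{(1)},D^{(0)},\dots,D^{(\ell-1)},Z)$; it induces an observed law of $(Y,D,Z)$ via consistency. The average treatment effect is $\mathrm{ATE}=\mathbb{E}[Y^{(1)}-Y^{(0)}]$. For an observed law $\mathcal{P}$, $L(\mathcal{P})$ and $U(\mathcal{P})$ denote the infimum and supremum of ATE over all full data laws satisfying exclusion,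 random assignment and consistency that induce $\mathcal{P}$ (with $\inf\emptyset=+\infty$, $\sup\emptyset=-\infty$). *)

From HB Require Import structures.
From mathcomp Require Import all_boot all_order all_algebra.
From mathcomp Require Import all_classical all_reals ereal.
Set Implicit Arguments. Unset Strict Implicit. Unset Printing Implicit Defensive.
Import Order.TTheory GRing.Theory Num.Theory.
Local Open Scope ring_scope.
Local Open Scope classical_set_scope.

(* Y takes values gamma_0 < ... < gamma_{n-1}; we index outcome values by 'I_n.
   Z takes values in 'I_l, D in bool (false = 0, true = 1). *)

Definition obs_law (R : realType) (n l : nat) := {ffun ('I_n * bool * 'I_l) -> R}.

(* A full data law of (Y^(0), Y^(1), (D^(z))_{z in [l]}, Z).  Exclusion is built
   in: potential outcomes are indexed by d only. *)
Definition full_var (n l : nat) := ('I_n * 'I_n * {ffun 'I_l -> bool} * 'I_l)%type.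
Definition full_law (R : realType) (n l : nat) := {ffun full_var n l -> R}.

Definition is_pmf (R : realType) (T : finType) (p : {ffun T -> R}) : Prop :=
  (forall t, 0 <= p t) /\ \sum_(t : T) p t = 1.

(* Random assignment: Z independent of (Y^(0),Y^(1),D^(0..l-1)), i.e. the joint
   pmf is the product of the two marginals. *)
Definition rand_assign (R : realType) (n l : nat) (q : full_law R n l) : Prop :=
  forall (y0 y1 : 'I_n) (dv : {ffun 'I_l -> bool}) (z : 'I_l),
    q (y0, y1, dv, z) =
      (\sum_(z' : 'I_l) q (y0, y1, dv, z')) *
      (\sum_(a0 : 'I_n) \sum_(a1 : 'I_n) \sum_(av : {ffun 'I_l -> bool}) q (a0, a1, av, z)).

(* Consistency: D = D^(Z), Y = (1-D) Y^(0) + D Y^(1). *)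
Definition obs_of (n l : nat) (w : full_var n l) : 'I_n * bool * 'I_l :=
  let '(y0, y1, dv, z) := w in (if dv z then y1 else y0, dv z, z).

Definition induced (R : realType) (n l : nat) (q : full_law R n l) : obs_law R n l :=
  [ffun o => \sum_(w : full_var n l | obs_of w == o) q w].

Definition ATE (R : realType) (n l : nat) (gamma : 'I_n -> R) (q : full_law R n l) : R :=
  \sum_(w : full_var n l) q w * (gamma w.1.1.2 - gamma w.1.1.1).

Definition compatible (R : realType) (n l : nat) (P : obs_law R n l) (q : full_law R n l) : Prop :=
  is_pmf q /\ rand_assign q /\ induced q = P.

(* L(P) and U(P), with inf of empty = +oo and sup of empty = -oo. *)
Definition Lbound (R : realType) (n l : nat) (gamma : 'I_n -> R) (P : obs_law R n l) : \bar R :=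
  ereal_inf [set (ATE gamma q)%:E | q in [set q | compatible P q]].

Definition Ubound (R : realType) (n l : nat) (gamma : 'I_n -> R) (P : obs_law R n l) : \bar R :=
  ereal_sup [set (ATE gamma q)%:E | q in [set q | compatible P q]].

Definition bar_law (R : realType) (n l : nat) (P : obs_law R n l) : obs_law R n l :=
  [ffun o => P (o.1.1, ~~ o.1.2, o.2)].

From HB Require Import structures.
From mathcomp Require Import all_boot all_order all_algebra.
From mathcomp Require Import all_classical all_reals ereal.
Import Order.TTheory GRing.Theory Num.Theory.
Local Open Scope ring_scope.

(* Relabelling the treatment arms (exchange Y^(0) and Y^(1), replace every
   D^(z) by 1 - D^(z)) preserves the pmf property and random assignment, turns
   a full data law inducing P into one inducing bar P, and negates the ATE.
   As bar is an involution, the ATE values compatible with P are exactly the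
   negatives of those compatible with bar P, so the supremum of the former is
   minus the infimum of the latter. *)

Section ArmSwap.
Variables (R : realType) (n l : nat).
Local Open Scope classical_set_scope.

Definition negb_ffun (dv : {ffun 'I_l -> bool}) : {ffun 'I_l -> bool} :=
  [ffun z => ~~ dv z].

Lemma negb_ffunK : involutive negb_ffun.
Proof. by move=> dv; apply/ffunP => z; rewrite !ffunE negbK. Qed.

Definition swap_arms (w : full_var n l) : full_var n l :=
  let '(y0, y1, dv, z) := w in (y1, y0, negb_ffun dv, z).

Lemma swap_armsK : involutive swap_arms.
Proof. by case=> [[[y0 y1] dv] z] /=; rewrite negb_ffunK. Qed.

Lemma sum_swap_arms (F : full_var n l -> R) :
  \sum_w F (swap_arms w) = \sum_w F w.
Proof. by rewrite [RHS](reindex_inj (inv_inj swap_armsK)). Qed.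

Lemma obs_of_swap_arms (w : full_var n l) :
  obs_of (swap_arms w) = ((obs_of w).1.1, ~~ (obs_of w).1.2, (obs_of w).2).
Proof. by case: w => [[[y0 y1] dv] z] /=; rewrite ffunE; case: (dv z). Qed.

Definition relabel (q : full_law R n l) : full_law R n l :=
  [ffun w => q (swap_arms w)].

Lemma ATE_relabel (gamma : 'I_n -> R) q :
  ATE gamma (relabel q) = - ATE gamma q.
Proof.
rewrite /ATE -sumrN -sum_swap_arms; apply: eq_bigr => -[[[y0 y1] dv] z] _.
by rewrite ffunE swap_armsK /= -mulrN opprB.
Qed.

Lemma is_pmf_relabel q : is_pmf q -> is_pmf (relabel q).
Proof.
case=> q_ge0 q_sum1; split=> [w|]; first by rewrite ffunE.
by rewrite -q_sum1 -sum_swap_arms; apply: eq_bigr => w _; rewrite ffunE swap_armsK.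
Qed.

Lemma rand_assign_relabel q : rand_assign q -> rand_assign (relabel q).
Proof.
move=> q_indep y0 y1 dv z; rewrite !ffunE /= q_indep; congr (_ * _).
  by apply: eq_bigr => z' _; rewrite ffunE.
rewrite exchange_big /=; apply: eq_bigr => a1 _; apply: eq_bigr => a0 _.
rewrite [RHS](reindex_inj (inv_inj negb_ffunK)) /=.
by apply: eq_bigr => av _; rewrite ffunE /= negb_ffunK.
Qed.

Lemma induced_relabel q : induced (relabel q) = bar_law (induced q).
Proof.
apply/ffunP => -[[y d] z]; rewrite !ffunE /= (reindex_inj (inv_inj swap_armsK)).
apply: eq_big => [w|w _]; last by rewrite ffunE swap_armsK.
by rewrite obs_of_swap_arms; case: (obs_of w) => -[y' d'] z'; rewrite !xpair_eqE -eqb_negLR.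
Qed.

Lemma bar_lawK : involutive (@bar_law R n l).
Proof. by move=> P; apply/ffunP => -[[y d] z]; rewrite !ffunE /= negbK. Qed.

Lemma compatible_relabel (P : obs_law R n l) q :
  compatible P q -> compatible (bar_law P) (relabel q).
Proof.
case=> [q_pmf [q_indep <-]]; split; first exact: is_pmf_relabel.
by split; [exact: rand_assign_relabel | exact: induced_relabel].
Qed.

Local Notation ATE_set gamma P :=
  [set (ATE gamma q)%:E | q in [set q | compatible P q]].

Lemma ATE_set_opp_bar_law (gamma : 'I_n -> R) (P : obs_law R n l) :
  ATE_set gamma P = [set (- x)%E | x in ATE_set gamma (bar_law P)].
Proof.
apply/seteqP; split=> x.
- case=> q Cq <-; exists (ATE gamma (relabel q))%:E.
    by exists (relabel q) => //; exact: compatible_relabel.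
  by rewrite ATE_relabel /= opprK.
- case=> _ [q Cq <-] <-; exists (relabel q).
    by rewrite /= -[P]bar_lawK; exact: compatible_relabel.
  by rewrite ATE_relabel.
Qed.

End ArmSwap.

Theorem proposition1 (R : realType) (n l : nat) (gamma : 'I_n -> R)
  (gamma_incr : forall i j : 'I_n, (i < j)%N -> gamma i < gamma j)
  (P : obs_law R n l) (hP : is_pmf P) :
  Ubound gamma P = (- Lbound gamma (bar_law P))%E.
Proof. by rewrite /Ubound /Lbound /ereal_inf oppeK ATE_set_opp_bar_law. Qed.
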